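(* Let $\Bbbk$ be a field of characteristic $\neq 2$ and let $L$ be a Lie algebra over $\Bbbk$. Let $U_\perp(L)$ be the universal enveloping Lie tri-algebra of $L$ with respect to the functor that sends a Lie tri-algebra $(A,[\cdot\vdash\cdot],[\cdot\dashv\cdot],[\cdot\perp\cdot])$ to the Lie algebra $(A,[\cdot\perp\cdot])$. Let $\dot L$ be an isomorphic copy of $L$ and $\dot L*L$ the free product of Lie algebras. Then $U_\perp(L)$ is isomorphic, as a linear space, to the ideal of $\dot L*L$ generated by $\dot L$.
   Context: A Lie tri-algebra is a vector space with three bilinear operations $[\cdot\vdash\cdot]$, $[\cdot\dashv\cdot]$, $[\cdot\perp\cdot]$ such that $[a\dashv b]=-[b\vdash a]$, $[a\perp b]=-[b\perp a]$, and for all $x_1,x_2,x_3$: $[[x_1\vdash x_2]\vdash x_3]-[x_1\vdash[x_2\vdash x_3]]+[x_2\vdash[x_1\vdash x_3]]=0$; $[[x_1\perp x_2]\vdash x_3]=[[x_1\vdash x_2]\vdash x_3]$; $[[x_1\vdash x_2]\perp x_3]-[x_1\vdash[x_2\perp x_3]]-[[x_1\vdash x_3]\perp x_2]=0$; $[[x_1\perp x_2]\perp x_3]+[[x_2\perp x_3]\perp x_1]+[[x_3\perp x_1]\perp x_2]=0$. The universal enveloping Lie tri-algebra $U_\perp(L)$ is a Lie tri-algebra together with a Lie algebra homomorphism $L\to(U_\perp(L),[\cdot\perp\cdot])$ through which every Lie algebra homomorphism from $L$ to $(A,[\cdot\perp\cdot])$, $A$ a Lie tri-algebra, factors uniquely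 via a Lie tri-algebra homomorphism. *)

From HB Require Import structures.
From mathcomp Require Import all_boot all_order all_algebra.
Set Implicit Arguments. Unset Strict Implicit. Unset Printing Implicit Defensive.
Import GRing.Theory.
Local Open Scope ring_scope.

Section Defs.
Variable K : fieldType.

Definition is_linear (U V : lmodType K) (f : U -> V) : Prop :=
  forall (a : K) (x y : U), f (a *: x + y) = a *: f x + f y.

Definition bilinear_op (V : lmodType K) (b : V -> V -> V) : Prop :=
  (forall (a : K) (x y z : V), b (a *: x + y) z = a *: b x z + b y z) /\
  (forall (a : K) (x y z : V), b z (a *: x + y) = a *: b z x + b z y).

Definition is_Lie (V : lmodType K) (br : V -> V -> V) : Prop :=
  [/\ bilinear_op br,
      (forall x, br x x = 0) &
      (forall x y z, br x (br y z) + br y (br z x) + br z (br x y) = 0)].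

Definition is_Lie_hom (U V : lmodType K) (bU : U -> U -> U) (bV : V -> V -> V)
  (f : U -> V) : Prop :=
  is_linear f /\ forall x y, f (bU x y) = bV (f x) (f y).

(* Lie tri-algebra (A, [.|-.] = vd, [.-|.] = dv, [.T.] = pp) *)
Definition is_Lie_tri (A : lmodType K) (vd dv pp : A -> A -> A) : Prop :=
  [/\ bilinear_op vd, bilinear_op dv, bilinear_op pp,
      (forall a b, dv a b = - vd b a) &
      (forall a b, pp a b = - pp b a)] /\
  [/\
(forall x1 x2 x3,
         vd (vd x1 x2) x3 - vd x1 (vd x2 x3) + vd x2 (vd x1 x3) = 0),
      (forall x1 x2 x3, vd (pp x1 x2) x3 = vd (vd x1 x2) x3),
      (forall x1 x2 x3,
         pp (vd x1 x2) x3 - vd x1 (pp x2 x3) - pp (vd x1 x3) x2 = 0) &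
      (forall x1 x2 x3,
         pp (pp x1 x2) x3 + pp (pp x2 x3) x1 + pp (pp x3 x1) x2 = 0)].

Definition is_Lie_tri_hom (A B : lmodType K)
  (vdA dvA ppA : A -> A -> A) (vdB dvB ppB : B -> B -> B) (g : A -> B) : Prop :=
  [/\ is_linear g,
      (forall x y, g (vdA x y) = vdB (g x) (g y)),
      (forall x y, g (dvA x y) = dvB (g x) (g y)) &
      (forall x y, g (ppA x y) = ppB (g x) (g y))].

Definition is_U_perp (L : lmodType K) (brL : L -> L -> L)
  (U : lmodType K) (vd dv pp : U -> U -> U) (iota : L -> U) : Prop :=
  [/\ is_Lie_tri vd dv pp, is_Lie_hom brL pp iota &
      forall (A : lmodType K) (vdA dvA ppA : A -> A -> A) (f : L -> A),
        is_Lie_tri vdA dvA ppA -> is_Lie_hom brL ppA f ->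
        exists g : U -> A,
          [/\ is_Lie_tri_hom vd dv pp vdA dvA ppA g,
              (forall l, g (iota l) = f l) &
              forall g' : U -> A, is_Lie_tri_hom vd dv pp vdA dvA ppA g' ->
                (forall l, g' (iota l) = f l) -> forall u, g' u = g u]].

(* (F, brF) with j1 : L-dot -> F (L-dot an isomorphic copy of L, identified
   with L) and j2 : L -> F is the free product L-dot * L of Lie algebras. *)
Definition is_free_product (L : lmodType K) (brL : L -> L -> L)
  (F : lmodType K) (brF : F -> F -> F) (j1 j2 : L -> F) : Prop :=
  [/\ is_Lie brF, is_Lie_hom brL brF j1, is_Lie_hom brL brF j2 &
      forall (M : lmodType K) (brM : M -> M -> M) (h1 h2 : L -> M),
        is_Lie brM -> is_Lie_hom brL brM h1 -> is_Lie_hom brL brM h2 ->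
        exists h : F -> M,
          [/\ is_Lie_hom brF brM h,
              (forall l, h (j1 l) = h1 l),
              (forall l, h (j2 l) = h2 l) &
              forall h' : F -> M, is_Lie_hom brF brM h' ->
                (forall l, h' (j1 l) = h1 l) -> (forall l, h' (j2 l) = h2 l) ->
                forall x, h' x = h x]].

Definition is_ideal (F : lmodType K) (brF : F -> F -> F) (P : F -> Prop) : Prop :=
  [/\ P 0,
      (forall x y, P x -> P y -> P (x + y)),
      (forall (a : K) x, P x -> P (a *: x)) &
      (forall x y, P y -> P (brF x y))].

Definition gen_ideal (F : lmodType K) (brF : F -> F -> F) (S : F -> Prop)
  (x : F) : Prop :=
  forall P : F -> Prop, is_ideal brF P -> (forall y, S y -> P y) -> P x.

End Defs.

From HB Require Import structures.
From mathcomp Require Import all_boot all_order all_algebra.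
From mathcomp Require Import boolp.
Set Implicit Arguments. Unset Strict Implicit. Unset Printing Implicit Defensive.
Import GRing.Theory.
Local Open Scope ring_scope.

(* Let π be the Lie endomorphism of F = L̇ * L sending both copies of L onto
   the second one.  Since π is idempotent, [x ⊢ y] := [π x, y],
   [x ⊣ y] := -[π y, x] and [x ⊥ y] := [x, y] make F a Lie tri-algebra, so
   the copy L → L̇ extends to a tri-algebra map g : U⊥(L) → F.  The image of g
   lies in the ideal I generated by L̇, contains L̇, and is stable under
   brackets with L̇ and with L, since [l̇, g u] = g [ι l ⊥ u] and
   [l, g u] = g [ι l ⊢ u]; hence it is I.
   For injectivity, let L act on U⊥(L) by the derivations [ι l ⊢ ·] and let
   h : F → U⊥(L) ⋊ L be the Lie map with l̇ ↦ (ι l, 0) and l ↦ (0, l); the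
   semidirect product is a Lie algebra since char K ≠ 2 makes ⊥ alternating.
   Then h kills the L-component on I, and (u, l) ↦ [u ⊢ ·] + [ι l ⊢ ·] is a
   representation of U⊥(L) ⋊ L that agrees along h with [ι (k ·) ⊢ ·], where
   k : F → L is the folding map.  It follows that the first component of
   h ∘ g is a tri-algebra endomorphism of U⊥(L) fixing ι, hence the identity. *)

Section LinearMaps.
Variables (K : fieldType) (U V : lmodType K) (f : U -> V).
Hypothesis hf : is_linear f.

Lemma is_linear0 : f 0 = 0.
Proof.
have := hf 1 0 0; rewrite !scale1r addr0 => f00.
by apply: (addrI (f 0)); rewrite addr0 -f00.
Qed.

Lemma is_linearD x y : f (x + y) = f x + f y.
Proof. by rewrite -[x]scale1r hf !scale1r. Qed.

Lemma is_linearZ a x : f (a *: x) = a *: f x.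
Proof. by rewrite -[a *: x]addr0 hf is_linear0 addr0. Qed.

Lemma is_linearN x : f (- x) = - f x.
Proof. by rewrite -scaleN1r is_linearZ scaleN1r. Qed.

Lemma is_linearB x y : f (x - y) = f x - f y.
Proof. by rewrite is_linearD is_linearN. Qed.
End LinearMaps.

Section BilinearOps.
Variables (K : fieldType) (V : lmodType K) (br : V -> V -> V).
Hypothesis hbr : bilinear_op br.

Let linl z : is_linear (br^~ z). Proof. by move=> a x y; apply: hbr.1. Qed.
Let linr z : is_linear (br z). Proof. by move=> a x y; apply: hbr.2. Qed.

Lemma bilin0l z : br 0 z = 0.
Proof. exact: (is_linear0 (linl z)). Qed.

Lemma bilin0r z : br z 0 = 0.
Proof. exact: (is_linear0 (linr z)). Qed.

Lemma bilinDl x y z : br (x + y) z = br x z + br y z.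
Proof. exact: (is_linearD (linl z) x y). Qed.

Lemma bilinDr x y z : br z (x + y) = br z x + br z y.
Proof. exact: (is_linearD (linr z) x y). Qed.

Lemma bilinZl a x z : br (a *: x) z = a *: br x z.
Proof. exact: (is_linearZ (linl z) a x). Qed.

Lemma bilinNr x z : br z (- x) = - br z x.
Proof. exact: (is_linearN (linr z) x). Qed.

Lemma bilinBl x y z : br (x - y) z = br x z - br y z.
Proof. exact: (is_linearB (linl z) x y). Qed.
End BilinearOps.

Section LieAlgebras.
Variables (K : fieldType) (V : lmodType K) (br : V -> V -> V).
Hypothesis hL : is_Lie br.

Lemma Lie_bilinear : bilinear_op br. Proof. by case: hL. Qed.

Lemma Lie_anti x y : br x y = - br y x.
Proof.
have [hb br_xx _] := hL.
apply/eqP; rewrite -addr_eq0; apply/eqP.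
by have := br_xx (x + y); rewrite (bilinDl hb) !(bilinDr hb) !br_xx add0r addr0.
Qed.

Lemma Lie_jacobi_l a b c : br (br a b) c = br a (br b c) - br b (br a c).
Proof.
have [hb _ jacobi] := hL.
have := jacobi a b c; rewrite (Lie_anti c a) (bilinNr hb) (Lie_anti c (br a b)).
by move/eqP; rewrite subr_eq0 => /eqP ->.
Qed.
End LieAlgebras.

Lemma is_Lie_hom_comp (K : fieldType) (A B C : lmodType K) (bA : A -> A -> A)
  (bB : B -> B -> B) (bC : C -> C -> C) (f : A -> B) (g : B -> C) :
  is_Lie_hom bA bB f -> is_Lie_hom bB bC g -> is_Lie_hom bA bC (g \o f).
Proof.
case=> f_lin f_br [g_lin g_br].
by split=> [a x y|x y] /=; rewrite ?f_lin ?g_lin ?f_br ?g_br.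
Qed.

Lemma is_Lie_tri_hom_comp (K : fieldType) (A B C : lmodType K)
  (vdA dvA ppA : A -> A -> A) (vdB dvB ppB : B -> B -> B) (vdC dvC ppC : C -> C -> C)
  (f : A -> B) (g : B -> C) :
  is_Lie_tri_hom vdA dvA ppA vdB dvB ppB f -> is_Lie_tri_hom vdB dvB ppB vdC dvC ppC g ->
  is_Lie_tri_hom vdA dvA ppA vdC dvC ppC (g \o f).
Proof.
case=> f_lin f_vd f_dv f_pp [g_lin g_vd g_dv g_pp].
by split=> [a x y|x y|x y|x y] /=;
  rewrite ?f_lin ?g_lin ?f_vd ?g_vd ?f_dv ?g_dv ?f_pp ?g_pp.
Qed.

Section SubLmodule.
Variables (K : fieldType) (V : lmodType K) (P : V -> Prop).
Hypotheses (P0 : P 0) (PD : forall x y, P x -> P y -> P (x + y))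
  (PZ : forall (a : K) x, P x -> P (a *: x)).

(* MathComp's sub-module construction wants a boolean predicate. *)
Definition pred_of_prop : {pred V} := fun x => `[< P x >].

Fact pred_of_prop_submod_closed : subsemimod_closed pred_of_prop.
Proof.
split; first split.
- exact/asboolP.
- by move=> x y /asboolP Px /asboolP Py; apply/asboolP/PD.
- by move=> a x /asboolP Px; apply/asboolP/PZ.
Qed.

HB.instance Definition _ :=
  GRing.isSubmodClosed.Build K V pred_of_prop pred_of_prop_submod_closed.
HB.instance Definition _ := [SubChoice_isSubLmodule of {x : V | pred_of_prop x} by <:].

Definition sub_lmod : lmodType K := {x : V | pred_of_prop x}.

Lemma sub_lmod_valP (x : sub_lmod) : P (val x).
Proof. exact/asboolP/(valP x). Qed.

Definition sub_fun (W : Type) (f : W -> V) (fP : forall w, P (f w)) (w : W) : sub_lmod :=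
  exist _ (f w) (asboolT (fP w)).

Definition sub_op (op : V -> V -> V) (opP : forall x y, P x -> P y -> P (op x y))
    (x y : sub_lmod) : sub_lmod :=
  exist _ (op (val x) (val y)) (asboolT (opP _ _ (sub_lmod_valP x) (sub_lmod_valP y))).

Lemma sub_op_bilinear (op : V -> V -> V) (opP : forall x y, P x -> P y -> P (op x y)) :
  bilinear_op op -> bilinear_op (sub_op opP).
Proof. by case=> opl opr; split=> a x y z; apply: val_inj; rewrite /= ?opl ?opr. Qed.

Section SubOps.
Variables (br vd dv pp : V -> V -> V).
Hypotheses (brP : forall x y, P x -> P y -> P (br x y))
  (vdP : forall x y, P x -> P y -> P (vd x y))
  (dvP : forall x y, P x -> P y -> P (dv x y))
  (ppP : forall x y, P x -> P y -> P (pp x y)).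

Lemma sub_op_Lie : is_Lie br -> is_Lie (sub_op brP).
Proof.
case=> hb br_xx jacobi; split; first exact: sub_op_bilinear.
  by move=> x; apply: val_inj; rewrite /= br_xx.
by move=> x y z; apply: val_inj; rewrite /= jacobi.
Qed.

Lemma sub_op_Lie_tri :
  is_Lie_tri vd dv pp -> is_Lie_tri (sub_op vdP) (sub_op dvP) (sub_op ppP).
Proof.
case=> [[hvd hdv hpp dvE ppA] [ax1 ax2 ax3 ax4]].
split; split; try by apply: sub_op_bilinear.
all: move=> *; apply: val_inj.
all: first [exact: dvE | exact: ppA | exact: ax1 | exact: ax2 | exact: ax3 | exact: ax4].
Qed.

Lemma sub_fun_Lie_hom (W : lmodType K) (brW : W -> W -> W) (f : W -> V)
    (fP : forall w, P (f w)) :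
  is_Lie_hom brW br f -> is_Lie_hom brW (sub_op brP) (sub_fun fP).
Proof.
by case=> f_lin f_br; split=> [a x y|x y]; apply: val_inj; rewrite /= ?f_lin ?f_br.
Qed.

Lemma val_Lie_hom : is_Lie_hom (sub_op brP) br val.
Proof. by []. Qed.

Lemma val_Lie_tri_hom : is_Lie_tri_hom (sub_op vdP) (sub_op dvP) (sub_op ppP) vd dv pp val.
Proof. by []. Qed.
End SubOps.
End SubLmodule.

Section Ideals.
Variables (K : fieldType) (F : lmodType K) (brF : F -> F -> F).

Lemma idealN (I : F -> Prop) x : is_ideal brF I -> I x -> I (- x).
Proof. by case=> _ _ IZ _ Ix; rewrite -scaleN1r; apply: IZ. Qed.

Variable S : F -> Prop.

Lemma gen_ideal_ideal : is_ideal brF (gen_ideal brF S).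
Proof.
split.
- by move=> I [I0 _ _ _] _.
- by move=> x y Hx Hy I hI SI; have [_ ID _ _] := hI; apply: ID; [apply: Hx | apply: Hy].
- by move=> a x Hx I hI SI; have [_ _ IZ _] := hI; apply: IZ; apply: Hx.
- by move=> x y Hy I hI SI; have [_ _ _ Ibr] := hI; apply: Ibr; apply: Hy.
Qed.

Lemma gen_ideal_gen y : S y -> gen_ideal brF S y.
Proof. by move=> Sy I _ SI; apply: SI. Qed.
End Ideals.

Section UniversalEnvelope.
Variables (K : fieldType) (L : lmodType K) (brL : L -> L -> L)
  (U : lmodType K) (vd dv pp : U -> U -> U) (iota : L -> U).
Hypothesis hU : is_U_perp brL vd dv pp iota.

Lemma U_perp_hom_unique (A : lmodType K) (vdA dvA ppA : A -> A -> A) (g g' : U -> A) :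
  is_Lie_tri vdA dvA ppA ->
  is_Lie_tri_hom vd dv pp vdA dvA ppA g -> is_Lie_tri_hom vd dv pp vdA dvA ppA g' ->
  (forall l, g (iota l) = g' (iota l)) -> forall u, g u = g' u.
Proof.
move=> hA hg hg' g_g'; have [_ hiota univ] := hU.
have hg_iota : is_Lie_hom brL ppA (g \o iota).
  by apply: is_Lie_hom_comp hiota _; case: hg.
have [g0 [_ _ g0_unique]] := univ _ _ _ _ _ hA hg_iota.
by move=> u; rewrite (g0_unique g hg (fun=> erefl))
  (g0_unique g' hg' (fun l => esym (g_g' l))).
Qed.

Lemma U_perp_ind (P : U -> Prop) (P0 : P 0)
    (PD : forall x y, P x -> P y -> P (x + y)) (PZ : forall a x, P x -> P (a *: x))
    (vdP : forall x y, P x -> P y -> P (vd x y))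
    (dvP : forall x y, P x -> P y -> P (dv x y))
    (ppP : forall x y, P x -> P y -> P (pp x y))
    (iotaP : forall l, P (iota l)) :
  forall u, P u.
Proof.
have [htri hiota univ] := hU.
have [g [hg g_iota _]] := univ _ _ _ _ _ (sub_op_Lie_tri P0 PD PZ vdP dvP ppP htri)
  (sub_fun_Lie_hom P0 PD PZ ppP iotaP hiota).
have hval_g := is_Lie_tri_hom_comp hg (val_Lie_tri_hom _ _ _ vdP dvP ppP).
have hid : is_Lie_tri_hom vd dv pp vd dv pp id by [].
move=> u; rewrite -(U_perp_hom_unique htri hval_g hid (fun l => congr1 val (g_iota l)) u).
exact: sub_lmod_valP.
Qed.
End UniversalEnvelope.

Section FreeProduct.
Variables (K : fieldType) (L : lmodType K) (brL : L -> L -> L)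
  (F : lmodType K) (brF : F -> F -> F) (j1 j2 : L -> F).
Hypothesis hF : is_free_product brL brF j1 j2.

Lemma free_product_hom_unique (M : lmodType K) (brM : M -> M -> M) (h h' : F -> M) :
  is_Lie brM -> is_Lie_hom brF brM h -> is_Lie_hom brF brM h' ->
  (forall l, h (j1 l) = h' (j1 l)) -> (forall l, h (j2 l) = h' (j2 l)) ->
  forall x, h x = h' x.
Proof.
move=> hM hh hh' h_j1 h_j2; have [_ hj1 hj2 univ] := hF.
have [h0 [_ _ _ h0_unique]] :=
  univ _ _ _ _ hM (is_Lie_hom_comp hj1 hh) (is_Lie_hom_comp hj2 hh).
by move=> x; rewrite (h0_unique h hh (fun=> erefl) (fun=> erefl))
  (h0_unique h' hh' (fun l => esym (h_j1 l)) (fun l => esym (h_j2 l))).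
Qed.

Lemma free_product_ind (P : F -> Prop) (P0 : P 0)
    (PD : forall x y, P x -> P y -> P (x + y)) (PZ : forall a x, P x -> P (a *: x))
    (brP : forall x y, P x -> P y -> P (brF x y))
    (j1P : forall l, P (j1 l)) (j2P : forall l, P (j2 l)) :
  forall x, P x.
Proof.
have [hFL hj1 hj2 univ] := hF.
have [h [hh h_j1 h_j2 _]] := univ _ _ _ _ (sub_op_Lie P0 PD PZ brP hFL)
  (sub_fun_Lie_hom P0 PD PZ brP j1P hj1) (sub_fun_Lie_hom P0 PD PZ brP j2P hj2).
have hval_h := is_Lie_hom_comp hh (val_Lie_hom _ _ _ brP).
have hid : is_Lie_hom brF brF id by [].
move=> x; rewrite -(free_product_hom_unique hFL hval_h hid
  (fun l => congr1 val (h_j1 l)) (fun l => congr1 val (h_j2 l)) x).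
exact: sub_lmod_valP.
Qed.
End FreeProduct.

Section LieTriAlgebras.
Variables (K : fieldType) (A : lmodType K) (vd dv pp : A -> A -> A).
Hypothesis htri : is_Lie_tri vd dv pp.

Lemma Lie_tri_pp_Lie : 2%N \notin [pchar K] -> is_Lie pp.
Proof.
move=> hchar; have [[_ _ hpp _ ppA] [_ _ _ jacobi]] := htri.
have two_neq0 : (2%:R : K) != 0 by move: hchar; rewrite inE.
split=> // [x | x y z].
  have : (2%:R : K) *: pp x x == 0 by rewrite scaler_nat mulr2n {1}ppA addNr.
  by rewrite scaler_eq0 (negPf two_neq0) => /eqP.
by rewrite (ppA x) (ppA y (pp z x)) (ppA z (pp x y)) -!opprD jacobi oppr0.
Qed.

Lemma Lie_tri_vd_pp_r x y z : vd x (pp y z) = pp (vd x y) z + pp y (vd x z).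
Proof.
have [[_ _ _ _ ppA] [_ _ ax3 _]] := htri.
have := ax3 x y z; rewrite (ppA (vd x z) y) opprK addrAC.
by move/eqP; rewrite subr_eq0 => /eqP.
Qed.

Lemma Lie_tri_vd_vd_l x y w : vd (vd x y) w = vd x (vd y w) - vd y (vd x w).
Proof.
have [_ [ax1 _ _ _]] := htri.
by apply/eqP; rewrite -subr_eq0 opprB addrA addrAC ax1.
Qed.

Lemma Lie_tri_vd_pp_l x y w : vd (pp x y) w = vd x (vd y w) - vd y (vd x w).
Proof. by have [_ [_ ax2 _ _]] := htri; rewrite ax2 Lie_tri_vd_vd_l. Qed.
End LieTriAlgebras.

Section ProjectionTriAlgebra.
Variables (K : fieldType) (F : lmodType K) (brF : F -> F -> F) (pi : F -> F).
Hypotheses (hF : is_Lie brF) (hpi : is_Lie_hom brF brF pi)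
  (pi_idem : forall x, pi (pi x) = pi x).

Definition proj_vd x y := brF (pi x) y.
Definition proj_dv x y := - brF (pi y) x.

Lemma proj_Lie_tri : is_Lie_tri proj_vd proj_dv brF.
Proof.
have [[brl brr] _ jacobi] := hF; have [pi_lin pi_br] := hpi.
rewrite /proj_vd /proj_dv; split; split => //.
- by split=> a x y z; rewrite ?pi_lin ?brl ?brr.
- by split=> a x y z; rewrite ?pi_lin ?brl ?brr opprD scalerN.
- exact: Lie_anti.
- by move=> x1 x2 x3; rewrite pi_br pi_idem (Lie_jacobi_l hF) addrAC subrK subrr.
- by move=> x1 x2 x3; rewrite !pi_br pi_idem.
- move=> x1 x2 x3; rewrite (Lie_jacobi_l hF) (Lie_anti hF (brF (pi x1) x3)) opprK.
  by rewrite addrAC subrK subrr.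
- move=> x1 x2 x3; rewrite (Lie_anti hF (brF x1 x2)) (Lie_anti hF (brF x2 x3)).
  by rewrite (Lie_anti hF (brF x3 x1)) -!opprD jacobi oppr0.
Qed.
End ProjectionTriAlgebra.

Section SemidirectProduct.
Variables (K : fieldType) (U L : lmodType K) (pp : U -> U -> U) (brL : L -> L -> L)
  (D : L -> U -> U).
Hypotheses (hpp : is_Lie pp) (hL : is_Lie brL)
  (D_linl : forall u, is_linear (D^~ u)) (D_linr : forall l, is_linear (D l))
  (D_pp : forall l u v, D l (pp u v) = pp (D l u) v + pp u (D l v))
  (D_br : forall l l' u, D (brL l l') u = D l (D l' u) - D l' (D l u)).

Let hbpp := Lie_bilinear hpp.
Let hbL := Lie_bilinear hL.
Let D0l u : D 0 u = 0. Proof. exact: is_linear0 (D_linl u). Qed.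
Let D0r l : D l 0 = 0. Proof. exact: is_linear0 (D_linr l). Qed.
Let D_linPl a l l' u : D (a *: l + l') u = a *: D l u + D l' u. Proof. exact: D_linl. Qed.
Let D_linPr a l u u' : D l (a *: u + u') = a *: D l u + D l u'. Proof. exact: D_linr. Qed.

Let pairZD (a : K) p q r s : a *: (p, q) + (r, s) = (a *: p + r, a *: q + s) :> U * L.
Proof. by []. Qed.

Definition semidirect_br (m m' : U * L) : U * L :=
  (pp m.1 m'.1 + D m.2 m'.1 - D m'.2 m.1, brL m.2 m'.2).

Lemma semidirect_br_inl u v : semidirect_br (u, 0) (v, 0) = (pp u v, 0).
Proof. by rewrite /semidirect_br /= !D0l subr0 addr0 (bilin0l hbL). Qed.

Lemma semidirect_br_act l v : semidirect_br (0, l) (v, 0) = (D l v, 0).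
Proof. by rewrite /semidirect_br /= D0r (bilin0l hbpp) (bilin0r hbL) add0r subr0. Qed.

Lemma semidirect_bilinear : bilinear_op semidirect_br.
Proof.
have addrACB (V : zmodType) (a1 a2 b1 b2 c1 c2 : V) :
    (a1 + a2) + (b1 + b2) - (c1 + c2) = (a1 + b1 - c1) + (a2 + b2 - c2).
  by rewrite opprD (addrACA a1) (addrACA (a1 + b1)).
split=> a x y z; rewrite /semidirect_br /= pairZD.
  by rewrite hbpp.1 D_linPl D_linPr hbL.1 addrACB !(scalerDr, scalerN).
by rewrite hbpp.2 D_linPl D_linPr hbL.2 addrACB !(scalerDr, scalerN).
Qed.

Lemma semidirect_br_inr l l' : semidirect_br (0, l) (0, l') = (0, brL l l').
Proof. by rewrite /semidirect_br /= !D0r (bilin0l hbpp) addr0 subr0. Qed.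

Lemma semidirect_br_act_r v l : semidirect_br (v, 0) (0, l) = (- D l v, 0).
Proof. by rewrite /semidirect_br /= D0l (bilin0r hbpp) (bilin0l hbL) add0r sub0r. Qed.

(* The Jacobiator is trilinear and invariant under cyclic permutations, so it
   suffices to check that it vanishes on the four kinds of triples of pure
   elements [(u, 0)] and [(0, l)] below. *)
Let jacobiator x y z := semidirect_br x (semidirect_br y z) +
  semidirect_br y (semidirect_br z x) + semidirect_br z (semidirect_br x y).

Let jacobiator_cycle x y z : jacobiator x y z = jacobiator y z x.
Proof. by rewrite /jacobiator -addrA addrC. Qed.

Let jacobiatorD x x' y z :
  jacobiator (x + x') y z = jacobiator x y z + jacobiator x' y z.
Proof.
have hb := semidirect_bilinear.
rewrite /jacobiator (bilinDl hb) !(bilinDr hb) (bilinDl hb) (bilinDr hb).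
by rewrite (addrACA (semidirect_br x _)) (addrACA (semidirect_br x _ + _)).
Qed.

Let pairD (p r : U) (q s : L) : (p, q) + (r, s) = (p + r, q + s). Proof. by []. Qed.

Let jacobiator_UUU u1 u2 u3 : jacobiator (u1, 0) (u2, 0) (u3, 0) = 0.
Proof.
have [_ _ jacobi] := hpp.
by rewrite /jacobiator !semidirect_br_inl !pairD /= !addr0 jacobi.
Qed.

Let jacobiator_UUL u1 u2 l : jacobiator (u1, 0) (u2, 0) (0, l) = 0.
Proof.
rewrite /jacobiator semidirect_br_act_r semidirect_br_act !semidirect_br_inl.
rewrite semidirect_br_act !pairD /= !addr0 D_pp (bilinNr hbpp).
by rewrite (Lie_anti hpp u2) addrC !addrA addrK subrr.
Qed.

Let jacobiator_ULL u l1 l2 : jacobiator (u, 0) (0, l1) (0, l2) = 0.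
Proof.
rewrite /jacobiator semidirect_br_inr semidirect_br_act_r !semidirect_br_act.
rewrite semidirect_br_act_r semidirect_br_act !pairD /= !addr0 D_br.
by rewrite (is_linearN (D_linr l2)) opprB subrK subrr.
Qed.

Let jacobiator_LLL l1 l2 l3 : jacobiator (0, l1) (0, l2) (0, l3) = 0.
Proof.
have [_ _ jacobi] := hL.
by rewrite /jacobiator !semidirect_br_inr !pairD /= !addr0 jacobi.
Qed.

Lemma semidirect_Lie : is_Lie semidirect_br.
Proof.
split; first exact: semidirect_bilinear.
  move=> [u l]; rewrite /semidirect_br /= addrK.
  by have [_ -> _] := hpp; have [_ -> _] := hL.
have jacobiatorD2 x y y' z : jacobiator x (y + y') z = jacobiator x y z + jacobiator x y' z.
  by rewrite jacobiator_cycle jacobiatorD -!(jacobiator_cycle x).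
have jacobiatorD3 x y z z' : jacobiator x y (z + z') = jacobiator x y z + jacobiator x y z'.
  by rewrite -jacobiator_cycle jacobiatorD !(jacobiator_cycle _ x y).
have J_ULU u1 u2 l : jacobiator (u1, 0) (0, l) (u2, 0) = 0.
  by rewrite -jacobiator_cycle jacobiator_UUL.
have J_LUU u1 u2 l : jacobiator (0, l) (u1, 0) (u2, 0) = 0.
  by rewrite jacobiator_cycle jacobiator_UUL.
have J_LUL u l1 l2 : jacobiator (0, l1) (u, 0) (0, l2) = 0.
  by rewrite jacobiator_cycle jacobiator_ULL.
have J_LLU u l1 l2 : jacobiator (0, l1) (0, l2) (u, 0) = 0.
  by rewrite -jacobiator_cycle jacobiator_ULL.
have split_pair (u : U) (l : L) : (u, l) = (u, 0) + (0, l) by rewrite pairD addr0 add0r.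
move=> [u1 l1] [u2 l2] [u3 l3]; rewrite -/(jacobiator _ _ _).
rewrite (split_pair u1) (split_pair u2) (split_pair u3).
rewrite !jacobiatorD !jacobiatorD2 !jacobiatorD3.
by rewrite jacobiator_UUU jacobiator_UUL J_ULU jacobiator_ULL J_LUU J_LUL J_LLU
  jacobiator_LLL !addr0.
Qed.

Lemma semidirect_inl_hom : is_Lie_hom pp semidirect_br (fun u => (u, 0)).
Proof.
split=> [a u v | u v]; last by rewrite semidirect_br_inl.
by rewrite pairZD scaler0 addr0.
Qed.

Lemma semidirect_inr_hom : is_Lie_hom brL semidirect_br (fun l => (0, l)).
Proof.
split=> [a l l' | l l']; last by rewrite semidirect_br_inr.
by rewrite pairZD scaler0 addr0.
Qed.
End SemidirectProduct.

Section TriAction.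
Variables (K : fieldType) (L : lmodType K) (brL : L -> L -> L)
  (U : lmodType K) (vd dv pp : U -> U -> U) (iota : L -> U).
Hypotheses (htri : is_Lie_tri vd dv pp) (hiota : is_Lie_hom brL pp iota).

Let hvd : bilinear_op vd. Proof. by have [[]] := htri. Qed.

Definition iota_act l u := vd (iota l) u.

Lemma iota_act_linl u : is_linear (iota_act^~ u).
Proof. by move=> a l l'; rewrite /iota_act hiota.1 hvd.1. Qed.

Lemma iota_act_linr l : is_linear (iota_act l).
Proof. by move=> a u u'; rewrite /iota_act hvd.2. Qed.

Lemma iota_act_pp l u v : iota_act l (pp u v) = pp (iota_act l u) v + pp u (iota_act l v).
Proof. exact: (Lie_tri_vd_pp_r htri). Qed.

Lemma iota_act_br l l' u :
  iota_act (brL l l') u = iota_act l (iota_act l' u) - iota_act l' (iota_act l u).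
Proof. by rewrite /iota_act hiota.2 (Lie_tri_vd_pp_l htri). Qed.

Lemma iota_semidirect_Lie :
  2%N \notin [pchar K] -> is_Lie brL -> is_Lie (semidirect_br pp brL iota_act).
Proof.
move=> hchar hL.
apply: semidirect_Lie hL iota_act_linl iota_act_linr iota_act_pp iota_act_br.
exact: Lie_tri_pp_Lie htri hchar.
Qed.

Definition tri_act (m : U * L) w := vd m.1 w + iota_act m.2 w.

Lemma tri_act_linl w : is_linear (tri_act^~ w).
Proof.
move=> a m m'; have act_lin := iota_act_linl w a m.2 m'.2.
by rewrite /tri_act /= hvd.1 act_lin scalerDr addrACA.
Qed.

Lemma tri_act_br m m' w :
  tri_act (semidirect_br pp brL iota_act m m') w =
  tri_act m (tri_act m' w) - tri_act m' (tri_act m w).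
Proof.
case: m m' => [u l] [u' l']; rewrite /tri_act /semidirect_br /iota_act /= hiota.2.
rewrite (bilinBl hvd) (bilinDl hvd) !(Lie_tri_vd_pp_l htri) !(Lie_tri_vd_vd_l htri).
rewrite !(bilinDr hvd); symmetry.
by rewrite !opprD opprK !addrA [LHS](ACl (1*5*3*6*7*2*4*8)).
Qed.
End TriAction.

Section Embedding.
Variables (K : fieldType) (L : lmodType K) (brL : L -> L -> L)
  (U : lmodType K) (vd dv pp : U -> U -> U) (iota : L -> U)
  (F : lmodType K) (brF : F -> F -> F) (j1 j2 : L -> F).
Hypotheses (hchar : 2%N \notin [pchar K]) (hL : is_Lie brL)
  (hU : is_U_perp brL vd dv pp iota) (hF : is_free_product brL brF j1 j2).
Variables (pi : F -> F) (k : F -> L) (g : U -> F) (h : F -> U * L).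
Hypotheses (hpi : is_Lie_hom brF brF pi)
  (pi_j1 : forall l, pi (j1 l) = j2 l) (pi_j2 : forall l, pi (j2 l) = j2 l).
Hypotheses (hk : is_Lie_hom brF brL k)
  (k_j1 : forall l, k (j1 l) = l) (k_j2 : forall l, k (j2 l) = l).
Hypotheses (hg : is_Lie_tri_hom vd dv pp (proj_vd brF pi) (proj_dv brF pi) brF g)
  (g_iota : forall l, g (iota l) = j1 l).
Hypotheses (hh : is_Lie_hom brF (semidirect_br pp brL (iota_act vd iota)) h)
  (h_j1 : forall l, h (j1 l) = (iota l, 0)) (h_j2 : forall l, h (j2 l) = (0, l)).

Local Notation J := (fun z => exists l, z = j1 l).

Let htri : is_Lie_tri vd dv pp. Proof. by case: hU. Qed.
Let hiota : is_Lie_hom brL pp iota. Proof. by case: hU. Qed.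
Let hFL : is_Lie brF. Proof. by case: hF. Qed.
Let hpp : is_Lie pp. Proof. exact: Lie_tri_pp_Lie htri hchar. Qed.
Let hvd : bilinear_op vd. Proof. by have [[]] := htri. Qed.
Let act_linl := iota_act_linl htri hiota.
Let act_linr := iota_act_linr iota htri.
Let hM := iota_semidirect_Lie htri hiota hchar hL.
Let act0l w : iota_act vd iota 0 w = 0. Proof. exact: is_linear0 (act_linl w). Qed.
Let tri_act_lin w := tri_act_linl htri hiota w.

Lemma h_pi x : h (pi x) = (0, k x).
Proof.
have hinr_k := is_Lie_hom_comp hk (semidirect_inr_hom brL hpp act_linr).
apply: (free_product_hom_unique hF hM (is_Lie_hom_comp hpi hh) hinr_k) => l /=.
  by rewrite pi_j1 h_j2 k_j1.
by rewrite pi_j2 h_j2 k_j2.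
Qed.

Lemma tri_act_h z w : tri_act vd iota (h z) w = iota_act vd iota (k z) w.
Proof.
have [h_lin h_br] := hh; have [k_lin k_br] := hk.
move: z w; apply: (free_product_ind hF)
  => [w | x y Px Py w | a x Px w | x y Px Py w | l w | l w].
- by rewrite (is_linear0 h_lin) (is_linear0 k_lin) (is_linear0 (tri_act_lin w)) act0l.
- rewrite (is_linearD h_lin) (is_linearD k_lin) (is_linearD (tri_act_lin w)).
  by rewrite (is_linearD (act_linl w)) Px Py.
- rewrite (is_linearZ h_lin) (is_linearZ k_lin) (is_linearZ (tri_act_lin w)).
  by rewrite (is_linearZ (act_linl w)) Px.
- by rewrite h_br k_br (tri_act_br htri hiota) !Px !Py (iota_act_br htri hiota).
- by rewrite h_j1 k_j1 /tri_act /= act0l addr0.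
- by rewrite h_j2 k_j2 /tri_act /= (bilin0l hvd) add0r.
Qed.

Lemma snd_h_ideal y : gen_ideal brF J y -> (h y).2 = 0.
Proof.
move=> Hy; have [h_lin h_br] := hh; apply: (Hy (fun y => (h y).2 = 0)).
  split=> [|x x' Hx Hx'|a x Hx|x x' Hx'].
  - by rewrite (is_linear0 h_lin).
  - by rewrite (is_linearD h_lin) /= Hx Hx' addr0.
  - by rewrite (is_linearZ h_lin) /= Hx scaler0.
  - by rewrite h_br /= Hx' (bilin0r (Lie_bilinear hL)).
by move=> _ [l ->]; rewrite h_j1.
Qed.

Lemma g_ideal u : gen_ideal brF J (g u).
Proof.
have [g_lin g_vd g_dv g_pp] := hg.
have [I0 ID IZ Ibr] := gen_ideal_ideal brF J.
move: u; apply: (U_perp_ind hU) => [|x y|a x|x y _|x y Hx _|x y _|l].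
- by rewrite (is_linear0 g_lin).
- by rewrite (is_linearD g_lin); apply: ID.
- by rewrite (is_linearZ g_lin); apply: IZ.
- by rewrite g_vd; apply: Ibr.
- by rewrite g_dv /proj_dv; apply: (idealN (gen_ideal_ideal brF J)); apply: Ibr.
- by rewrite g_pp; apply: Ibr.
- by rewrite g_iota; apply: gen_ideal_gen; exists l.
Qed.

Lemma h_g u : h (g u) = ((h (g u)).1, 0).
Proof. by rewrite -(snd_h_ideal (g_ideal u)) -surjective_pairing. Qed.

Lemma fst_h_g u : (h (g u)).1 = u.
Proof.
have [g_lin g_vd g_dv g_pp] := hg; have [h_lin h_br] := hh.
pose r u := (h (g u)).1.
have r_lin : is_linear r by move=> a x y; rewrite /r g_lin h_lin.
have r_vd x y : r (vd x y) = vd (r x) (r y).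
  rewrite /r g_vd /proj_vd h_br h_pi (h_g y) semidirect_br_act //=.
  by rewrite -tri_act_h (h_g x) /tri_act /= act0l addr0.
have r_pp x y : r (pp x y) = pp (r x) (r y).
  by rewrite /r g_pp h_br (h_g x) (h_g y) semidirect_br_inl.
have r_dv x y : r (dv x y) = dv (r x) (r y).
  by have [[_ _ _ dvE _] _] := htri; rewrite !dvE (is_linearN r_lin) r_vd.
have r_iota l : r (iota l) = iota l by rewrite /r g_iota h_j1.
have hr : is_Lie_tri_hom vd dv pp vd dv pp r by split.
have hid : is_Lie_tri_hom vd dv pp vd dv pp id by [].
exact: (U_perp_hom_unique hU htri hr hid r_iota).
Qed.

Lemma image_g_br x y : (exists u, g u = y) -> exists u, g u = brF x y.
Proof.
have [g_lin g_vd _ g_pp] := hg; have hbF := Lie_bilinear hFL.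
move: x y; apply: (free_product_ind hF)
  => [y _|x x' Hx Hx' y Hy|a x Hx y Hy|x x' Hx Hx' y Hy|l y|l y].
- by exists 0; rewrite (is_linear0 g_lin) (bilin0l hbF).
- have [u gu] := Hx y Hy; have [v gv] := Hx' y Hy.
  by exists (u + v); rewrite (is_linearD g_lin) gu gv (bilinDl hbF).
- have [u gu] := Hx y Hy.
  by exists (a *: u); rewrite (is_linearZ g_lin) gu (bilinZl hbF).
- have [u gu] := Hx' y Hy; have [v gv] := Hx _ (ex_intro _ u gu).
  have [u' gu'] := Hx y Hy; have [v' gv'] := Hx' _ (ex_intro _ u' gu').
  by exists (v - v'); rewrite (is_linearB g_lin) gv gv' (Lie_jacobi_l hFL).
- by case=> u <-; exists (pp (iota l) u); rewrite g_pp g_iota.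
- by case=> u <-; exists (vd (iota l) u); rewrite g_vd /proj_vd g_iota pi_j1.
Qed.

Lemma ideal_image_g y : gen_ideal brF J y -> exists u, g u = y.
Proof.
move=> Hy; have [g_lin _ _ _] := hg; apply: (Hy (fun y => exists u, g u = y)).
  split=> [|x x' [u <-] [v <-]|a x [u <-]|x x'].
  - by exists 0; rewrite (is_linear0 g_lin).
  - by exists (u + v); rewrite (is_linearD g_lin).
  - by exists (a *: u); rewrite (is_linearZ g_lin).
  - exact: image_g_br.
by move=> _ [l ->]; exists (iota l).
Qed.
End Embedding.

Theorem theorem5p1 (K : fieldType) (hchar : 2%N \notin [pchar K])
  (L : lmodType K) (brL : L -> L -> L) (hL : is_Lie brL)
  (U : lmodType K) (vd dv pp : U -> U -> U) (iota : L -> U)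
  (hU : is_U_perp brL vd dv pp iota)
  (F : lmodType K) (brF : F -> F -> F) (j1 j2 : L -> F)
  (hF : is_free_product brL brF j1 j2) :
  exists phi : U -> F,
    [/\ is_linear phi, injective phi &
        forall y : F, gen_ideal brF (fun z => exists l, z = j1 l) y <->
                      exists u, phi u = y].
Proof.
have [htri hiota U_univ] := hU; have [hFL hj1 hj2 F_univ] := hF.
have [pi [hpi pi_j1 pi_j2 _]] := F_univ F brF j2 j2 hFL hj2 hj2.
have pi_idem x : pi (pi x) = pi x.
  apply: (free_product_hom_unique hF hFL (is_Lie_hom_comp hpi hpi) hpi) => l /=.
  - by rewrite pi_j1 pi_j2.
  - by rewrite !pi_j2.
have [g [hg g_iota _]] := U_univ F _ _ brF j1 (proj_Lie_tri hFL hpi pi_idem) hj1.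
have hid : is_Lie_hom brL brL id by [].
have [k [hk k_j1 k_j2 _]] := F_univ L brL id id hL hid hid.
have hinl := is_Lie_hom_comp hiota (semidirect_inl_hom pp hL (iota_act_linl htri hiota)).
have hinr := semidirect_inr_hom brL (Lie_tri_pp_Lie htri hchar) (iota_act_linr iota htri).
have [h [hh h_j1 h_j2 _]] :=
  F_univ _ _ _ _ (iota_semidirect_Lie htri hiota hchar hL) hinl hinr.
have fst_hg := fst_h_g hchar hL hU hF hpi pi_j1 pi_j2 hk k_j1 k_j2 hg g_iota hh h_j1 h_j2.
exists g; split; first by case: hg.
  by apply: (can_inj (g := fun x => (h x).1)) => u; apply: fst_hg.
move=> y; split=> [Hy|]; first exact: (ideal_image_g hF pi_j1 hg g_iota Hy).
by case=> u <-; exact: (g_ideal hU hg g_iota u).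
Qed.
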